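(* There exist six hyperplanes $W_1,\dots,W_6\subset\mathbb R^4$ which do phase retrieval on $\mathbb R^4$.
   Context: A hyperplane in $\mathbb R^4$ is a 3-dimensional subspace. A family of subspaces $\{W_i\}$ with orthogonal projections $P_i$ does phase retrieval if whenever $x,y\in\mathbb R^4$ satisfy $\|P_ix\|=\|P_iy\|$ for all $i$, then $x=\pm y$. *)

From mathcomp Require Import all_boot all_order all_algebra.
From mathcomp Require Import reals Rstruct.
Set Implicit Arguments. Unset Strict Implicit. Unset Printing Implicit Defensive.
Import Order.TTheory GRing.Theory Num.Theory.
Local Open Scope ring_scope.

(* Vectors of R^n are row vectors 'rV[R]_n; a subspace W of R^n is the row space
   of a square matrix W : 'M[R]_n (mxalgebra). *)

Definition Rn (n : nat) := 'rV[Rdefinitions.R]_n.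

Definition dotv n (x y : Rn n) : Rdefinitions.R := \sum_i x 0 i * y 0 i.
Definition normv n (x : Rn n) : Rdefinitions.R := Num.sqrt (dotv x x).

Definition hyperplane n (W : 'M[Rdefinitions.R]_n) : Prop := \rank W = n.-1.

(* Orthogonal projection onto the row space of W: the unique vector of W
   whose difference with x is orthogonal to W. *)
Definition orth_proj n (W : 'M[Rdefinitions.R]_n) (x : Rn n) : Rn n :=
  let B := row_base W in
  x *m B^T *m invmx (B *m B^T) *m B.

Definition phase_retrieval n (I : finType) (W : I -> 'M[Rdefinitions.R]_n) : Prop :=
  forall x y : Rn n,
    (forall i, normv (orth_proj (W i) x) = normv (orth_proj (W i) y)) ->
    x = y \/ x = - y.

From mathcomp Require Import all_boot all_order all_algebra.
From mathcomp Require Import reals Rstruct.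
From Stdlib Require Import Reals Lra.
From mathcomp Require Import ring.
Set Implicit Arguments. Unset Strict Implicit. Unset Printing Implicit Defensive.
Import Order.TTheory GRing.Theory Num.Theory.
Local Open Scope ring_scope.

(* Take W_i = u_i^perp.  Since |P x|^2 = |x|^2 - <x,u>^2 / |u|^2, the equality
   |P_i x| = |P_i y| says B_(u_i)(x - y, x + y) = 0 for the symmetric bilinear
   form B_u(a, b) = |u|^2 <a,b> - <a,u> <b,u>.  So the W_i do phase retrieval as
   soon as the forms B_(u_i) have no common zero (a, b) with a and b both nonzero.
   For the six normals below this follows from
   3 |a|^2 |b|^2 <= 100 sum_i B_(u_i)(a, b)^2,
   whose difference is an explicit sum of squares of bilinear forms. *)

Section Hyperplanes.
Variable n : nat.
Implicit Types (a b u v x y : Rn n) (c : Rdefinitions.R).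

Lemma dotvC x y : dotv x y = dotv y x.
Proof. by apply: eq_bigr => i _; rewrite mulrC. Qed.

Lemma dotvDl x y v : dotv (x + y) v = dotv x v + dotv y v.
Proof. by rewrite /dotv -big_split; apply: eq_bigr => i _; rewrite mxE mulrDl. Qed.

Lemma dotvNl x y : dotv (- x) y = - dotv x y.
Proof. by rewrite /dotv -sumrN; apply: eq_bigr => i _; rewrite mxE mulNr. Qed.

Lemma dotvZl c x y : dotv (c *: x) y = c * dotv x y.
Proof. by rewrite /dotv mulr_sumr; apply: eq_bigr => i _; rewrite mxE mulrA. Qed.

Lemma dotvDr x y v : dotv v (x + y) = dotv v x + dotv v y.
Proof. by rewrite dotvC dotvDl !(dotvC v). Qed.

Lemma dotvNr x y : dotv x (- y) = - dotv x y.
Proof. by rewrite dotvC dotvNl dotvC. Qed.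

Lemma dotvZr c x y : dotv x (c *: y) = c * dotv x y.
Proof. by rewrite dotvC dotvZl dotvC. Qed.

Lemma dotv_mx x y : dotv x y = (x *m y^T) 0 0.
Proof. by rewrite /dotv !mxE; apply: eq_bigr => i _; rewrite mxE. Qed.

Lemma dotvv_ge0 x : 0 <= dotv x x.
Proof. by apply: sumr_ge0 => i _; rewrite -expr2 sqr_ge0. Qed.

Lemma dotvv_eq0 x : (dotv x x == 0) = (x == 0).
Proof.
apply/idP/eqP => [|->]; last by rewrite /dotv big1 // => i _; rewrite mxE mul0r.
rewrite psumr_eq0 => [/allP x0|i _]; last by rewrite -expr2 sqr_ge0.
apply/rowP => i; apply/eqP; rewrite mxE -[_ == 0]orbb -mulf_eq0.
exact: x0 (mem_index_enum _).
Qed.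

(* For [u != 0], its row space is the hyperplane orthogonal to [u]. *)
Definition perp_mx u : 'M[Rdefinitions.R]_n := (dotv u u)%:M - u^T *m u.

Lemma mul_perp_mx u v : v *m perp_mx u = dotv u u *: v - dotv v u *: u.
Proof.
by rewrite mulmxBr mul_mx_scalar mulmxA [v *m u^T]mx11_scalar -dotv_mx mul_scalar_mx.
Qed.

Lemma tr_perp_mx u : (perp_mx u)^T = perp_mx u.
Proof. by rewrite /perp_mx linearB /= tr_scalar_mx trmx_mul trmxK. Qed.

Lemma rank_perp_mx u : u != 0 -> \rank (perp_mx u) = n.-1.
Proof.
move=> u0; have uu0 : dotv u u != 0 by rewrite dotvv_eq0.
have ker_u : (kermx (perp_mx u) == u)%MS.
  apply/andP; split; last by rewrite sub_kermx mul_perp_mx subrr.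
  apply/row_subP => i; set v := row i _.
  have : v *m perp_mx u = 0 by rewrite /v -row_mul mulmx_ker row0.
  rewrite mul_perp_mx => /eqP; rewrite subr_eq0 => /eqP vu.
  apply/sub_rVP; exists (dotv v u / dotv u u).
  by apply: (scalerI uu0); rewrite vu scalerA mulrCA mulfV // mulr1.
have := mxrank_ker (perp_mx u); rewrite (eqmx_rank ker_u) rank_rV u0 => /esym /= ker1.
by rewrite -subn1 -ker1 subKn // rank_leq_row.
Qed.

Lemma row_free_mul_tr m (B : 'M[Rdefinitions.R]_(m, n)) :
  row_free B -> B *m B^T \in unitmx.
Proof.
move=> freeB; rewrite -row_free_unit; apply: inj_row_free => v vBBt0.
have : dotv (v *m B) (v *m B) == 0.
  by rewrite dotv_mx trmx_mul mulmxA -(mulmxA v) vBBt0 mul0mx mxE.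
by rewrite dotvv_eq0 (mulmx_free_eq0 _ freeB) => /eqP.
Qed.

Lemma orth_proj_perp_mx u x : u != 0 ->
  orth_proj (perp_mx u) x = x - (dotv x u / dotv u u) *: u.
Proof.
move=> u0; have uu0 : dotv u u != 0 by rewrite dotvv_eq0.
rewrite /orth_proj; set B := row_base (perp_mx u); set c := _ / _.
have uBt0 : u *m B^T = 0.
  have /submxP[D ->] : (B <= perp_mx u)%MS by rewrite eq_row_base.
  by rewrite trmx_mul tr_perp_mx mulmxA mul_perp_mx subrr mul0mx.
have : (x - c *: u <= B)%MS.
  have -> : x - c *: u = (dotv u u)^-1 *: (x *m perp_mx u).
    by rewrite mul_perp_mx scalerBr !scalerA mulVf // scale1r mulrC.
  by rewrite eq_row_base scalemx_sub ?submxMl.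
case/submxP => v /(canRL (subrK _)) ->.
rewrite !mulmxDl -scalemxAl uBt0 scaler0 !mul0mx addr0 -(mulmxA v B).
by rewrite mulmxK ?row_free_mul_tr ?row_base_free // addrK.
Qed.

Definition perp_form u a b := dotv u u * dotv a b - dotv a u * dotv b u.

Lemma dotv_orth_proj_perp_mx u x : u != 0 ->
  dotv u u * dotv (orth_proj (perp_mx u) x) (orth_proj (perp_mx u) x)
  = dotv u u * dotv x x - dotv x u ^+ 2.
Proof.
move=> u0; have uu0 : dotv u u != 0 by rewrite dotvv_eq0.
rewrite orth_proj_perp_mx // !(dotvDl, dotvDr, dotvNl, dotvNr, dotvZl, dotvZr).
by rewrite (dotvC u x); field.
Qed.

Lemma perp_form_eq0 u x y : u != 0 ->
  normv (orth_proj (perp_mx u) x) = normv (orth_proj (perp_mx u) y) ->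
  perp_form u (x - y) (x + y) = 0.
Proof.
move=> u0 /eqP; rewrite /normv eqr_sqrt ?dotvv_ge0 // => /eqP.
move/(congr1 ( *%R (dotv u u))); rewrite !dotv_orth_proj_perp_mx // => eq_xy.
suff -> : perp_form u (x - y) (x + y) =
  (dotv u u * dotv x x - dotv x u ^+ 2) - (dotv u u * dotv y y - dotv y u ^+ 2).
  by rewrite eq_xy subrr.
by rewrite /perp_form !(dotvDl, dotvDr, dotvNl) (dotvC y x); ring.
Qed.

Lemma phase_retrieval_perp_mx (I : finType) (u : I -> Rn n) :
  (forall i, u i != 0) ->
  (forall a b, (forall i, perp_form (u i) a b = 0) -> a = 0 \/ b = 0) ->
  phase_retrieval (fun i => perp_mx (u i)).
Proof.
move=> u0 forms_eq0 x y eq_norms.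
case: (forms_eq0 (x - y) (x + y)) => [i|/eqP|/eqP].
- exact: perp_form_eq0.
- by rewrite subr_eq0 => /eqP; left.
- by rewrite addr_eq0 => /eqP; right.
Qed.

End Hyperplanes.

Section Certificate.
(* Stdlib's [ring]: the coefficients below overflow MathComp's unary numerals. *)
Import Stdlib.setoid_ring.Ring_tac.
Local Open Scope R_scope.

Definition normals : seq (seq R) :=
  [:: [:: 3; -2; -1; -1]; [:: -3; 2; -1; 0]; [:: 0; -1; 2; -1];
      [:: 3; 2; 2; -3]; [:: 2; 2; -3; -1]; [:: 0; 2; -2; -2]].

Variables a0 a1 a2 a3 b0 b1 b2 b3 : R.

Definition perp_form4 (u0 u1 u2 u3 : R) : R :=
  (u0*u0 + u1*u1 + u2*u2 + u3*u3) * (a0*b0 + a1*b1 + a2*b2 + a3*b3)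
  - (a0*u0 + a1*u1 + a2*u2 + a3*u3) * (b0*u0 + b1*u1 + b2*u2 + b3*u3).

Lemma six_forms_dominate :
  3 * ((a0*a0 + a1*a1 + a2*a2 + a3*a3) * (b0*b0 + b1*b1 + b2*b2 + b3*b3)) <=
  100 * ((perp_form4 3 (-2) (-1) (-1))² + (perp_form4 (-3) 2 (-1) 0)²
       + (perp_form4 0 (-1) 2 (-1))² + (perp_form4 3 2 2 (-3))²
       + (perp_form4 2 2 (-3) (-1))² + (perp_form4 0 2 (-2) (-2))²).
Proof.
(* Rounded Cholesky factor of a Gram matrix of the six forms in the products
   a_i b_j, plus a diagonally dominant remainder; the Gram matrix uses the
   relations (a_i b_j) (a_k b_l) = (a_i b_l) (a_k b_j). *)
pose sos :=
  (269435*a0*b0 - 34146*a0*b1 - 5567*a0*b2 + 73858*a0*b3 - 34146*a1*b0 + 301810*a1*b1 +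
      26938*a1*b2 + 59465*a1*b3 - 5567*a2*b0 + 26938*a2*b1 + 281991*a2*b2 + 7245*a2*b3 +
      73858*a3*b0 + 59465*a3*b1 + 7245*a3*b2 + 300912*a3*b3)²
  + (105967*a0*b1 + 9530*a0*b2 - 17723*a0*b3 + 104901*a1*b0 + 38743*a1*b1 + 8397*a1*b2 -
      32562*a1*b3 + 10870*a2*b0 + 8680*a2*b1 + 84967*a2*b2 - 27892*a2*b3 - 17931*a3*b0 -
      33685*a3*b1 - 26476*a3*b2 + 95905*a3*b3)²
  + (94198*a0*b2 - 28875*a0*b3 + 1615*a1*b0 - 33536*a1*b1 + 51699*a1*b2 - 25750*a1*b3 +
      91164*a2*b0 + 51936*a2*b1 - 71550*a2*b2 - 55382*a2*b3 - 30467*a3*b0 - 24363*a3*b1 -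
      57404*a3*b2 + 7444*a3*b3)²
  + (52840*a0*b3 + 109*a1*b0 + 60714*a1*b1 - 62092*a1*b2 - 9702*a1*b3 - 4085*a2*b0 -
      59294*a2*b1 + 80157*a2*b2 + 35417*a2*b3 + 44879*a3*b0 - 10985*a3*b1 + 35922*a3*b2 +
      49013*a3*b3)²
  + (14908*a1*b0 + 5962*a1*b1 - 2536*a1*b2 - 7451*a1*b3 - 18596*a2*b0 - 6587*a2*b1 +
      13246*a2*b2 + 13810*a2*b3 + 3167*a3*b0 + 8293*a3*b1 - 5998*a3*b2 + 5696*a3*b3)²
  + (39478*a1*b1 + 16802*a1*b2 - 10532*a1*b3 + 5199*a2*b0 + 13034*a2*b1 + 28308*a2*b2 +
      11377*a2*b3 + 10616*a3*b0 - 8654*a3*b1 + 10484*a3*b2 + 59610*a3*b3)²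
  + (19540*a1*b2 + 8111*a1*b3 - 11134*a2*b0 + 27481*a2*b1 - 3863*a2*b2 - 10426*a2*b3 -
      22752*a3*b0 + 4087*a3*b1 - 8492*a3*b2 + 9932*a3*b3)²
  + (22565*a1*b3 + 2322*a2*b0 - 1631*a2*b1 + 22621*a2*b2 - 31653*a2*b3 + 4739*a3*b0 +
      23204*a3*b1 - 31997*a3*b2 - 623*a3*b3)²
  + (4014*a2*b0 - 439*a2*b1 + 36*a2*b2 - 1968*a2*b3 + 1572*a3*b0 - 701*a3*b1 - 307*a3*b2 +
      584*a3*b3)²
  + (3085*a2*b1 - 1130*a2*b2 + 2*a2*b3 - 2388*a3*b0 - 935*a3*b1 + 612*a3*b2 + 652*a3*b3)²
  + (2765*a2*b2 - 1367*a2*b3 + 547*a3*b0 + 1766*a3*b1 - 2078*a3*b2 + 1177*a3*b3)²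
  + (2547*a2*b3 + 32*a3*b0 - 971*a3*b1 + 1712*a3*b2 + 427*a3*b3)²
  + (2176*a3*b0 + 601*a3*b1 - 829*a3*b2 + 3*a3*b3)² + (2322*a3*b1 - 1191*a3*b2 - 678*a3*b3)²
  + (2058*a3*b2 + 77*a3*b3)² + (2047*a3*b3)² + 127510 * (a0*b0 + a0*b1)²
  + 55355 * (a0*b0 - a0*b2)² + 69770 * (a0*b0 + a0*b3)² + 127510 * (a0*b0 + a1*b0)²
  + 177350 * (a0*b0 - a1*b1)² + 40030 * (a0*b0 - a1*b2)² + 47725 * (a0*b0 + a1*b3)²
  + 55355 * (a0*b0 - a2*b0)² + 40030 * (a0*b0 - a2*b1)² + 245085 * (a0*b0 - a2*b2)²
  + 56575 * (a0*b0 - a2*b3)² + 69770 * (a0*b0 + a3*b0)² + 47725 * (a0*b0 + a3*b1)²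
  + 56575 * (a0*b0 - a3*b2)² + 224720 * (a0*b0 - a3*b3)² + 43708 * (a0*b1 + a0*b2)²
  + 8409 * (a0*b1 + a0*b3)² + 6417 * (a0*b1 + a1*b0)² + 124779 * (a0*b1 + a1*b1)²
  + 20049 * (a0*b1 + a1*b2)² + 10656 * (a0*b1 - a1*b3)² + 47928 * (a0*b1 + a2*b0)²
  + 31388 * (a0*b1 + a2*b1)² + 166597 * (a0*b1 + a2*b2)² + 19334 * (a0*b1 + a2*b3)²
  + 49545 * (a0*b1 + a3*b0)² + 9715 * (a0*b1 - a3*b1)² + 29938 * (a0*b1 - a3*b2)²
  + 176017 * (a0*b1 + a3*b3)² + 34926 * (a0*b2 + a0*b3)² + 72918 * (a0*b2 + a1*b0)²
  + 20392 * (a0*b2 - a1*b1)² + 1966 * (a0*b2 - a1*b2)² + 43985 * (a0*b2 - a1*b3)²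
  + 49061 * (a0*b2 - a2*b0)² + 23882 * (a0*b2 - a2*b1)² + 24713 * (a0*b2 - a2*b2)²
  + 17311 * (a0*b2 + a2*b3)² + 19618 * (a0*b2 - a3*b0)² + 5579 * (a0*b2 + a3*b1)²
  + 8813 * (a0*b2 - a3*b2)² + 7458 * (a0*b2 - a3*b3)² + 10744 * (a0*b3 - a1*b0)²
  + 79449 * (a0*b3 + a1*b1)² + 16868 * (a0*b3 - a1*b2)² + 60134 * (a0*b3 + a1*b3)²
  + 28396 * (a0*b3 + a2*b0)² + 4204 * (a0*b3 - a2*b1)² + 76733 * (a0*b3 + a2*b2)²
  + 20656 * (a0*b3 - a2*b3)² + 63738 * (a0*b3 + a3*b0)² + 550 * (a0*b3 + a3*b1)²
  + 5662 * (a0*b3 + a3*b2)² + 64399 * (a0*b3 + a3*b3)² + 86135 * (a1*b0 + a1*b1)²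
  + 52082 * (a1*b0 + a1*b2)² + 1528 * (a1*b0 + a1*b3)² + 79921 * (a1*b0 + a2*b0)²
  + 69670 * (a1*b0 + a2*b1)² + 86188 * (a1*b0 + a2*b2)² + 11541 * (a1*b0 - a2*b3)²
  + 33857 * (a1*b0 + a3*b0)² + 6359 * (a1*b0 - a3*b1)² + 43208 * (a1*b0 - a3*b2)²
  + 130302 * (a1*b0 + a3*b3)² + 41123 * (a1*b1 - a1*b2)² + 118302 * (a1*b1 + a1*b3)²
  + 44316 * (a1*b1 - a2*b0)² + 29966 * (a1*b1 - a2*b1)² + 248965 * (a1*b1 - a2*b2)²
  + 68610 * (a1*b1 - a2*b3)² + 112733 * (a1*b1 + a3*b0)² + 31773 * (a1*b1 + a3*b1)²
  + 49910 * (a1*b1 - a3*b2)² + 274565 * (a1*b1 - a3*b3)² + 38402 * (a1*b2 - a1*b3)²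
  + 306 * (a1*b2 + a2*b0)² + 55244 * (a1*b2 + a2*b1)² + 125703 * (a1*b2 - a2*b2)²
  + 60458 * (a1*b2 - a2*b3)² + 44336 * (a1*b2 - a3*b0)² + 22468 * (a1*b2 + a3*b1)²
  + 78034 * (a1*b2 - a3*b2)² + 7345 * (a1*b2 - a3*b3)² + 60059 * (a1*b3 - a2*b0)²
  + 48923 * (a1*b3 - a2*b1)² + 97083 * (a1*b3 + a2*b2)² + 22110 * (a1*b3 + a2*b3)²
  + 66582 * (a1*b3 + a3*b0)² + 38383 * (a1*b3 + a3*b1)² + 44114 * (a1*b3 + a3*b2)²
  + 86615 * (a1*b3 + a3*b3)² + 30084 * (a2*b0 - a2*b1)² + 53632 * (a2*b0 - a2*b2)²
  + 18519 * (a2*b0 + a2*b3)² + 32027 * (a2*b0 - a3*b0)² + 30 * (a2*b0 - a3*b1)²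
  + 19059 * (a2*b0 - a3*b2)² + 21213 * (a2*b0 - a3*b3)² + 96422 * (a2*b1 - a2*b2)²
  + 28707 * (a2*b1 - a2*b3)² + 29992 * (a2*b1 - a3*b0)² + 19648 * (a2*b1 + a3*b1)²
  + 59448 * (a2*b1 - a3*b2)² + 7255 * (a2*b1 - a3*b3)² + 15438 * (a2*b2 - a2*b3)²
  + 144954 * (a2*b2 + a3*b0)² + 24978 * (a2*b2 - a3*b1)² + 21802 * (a2*b2 + a3*b2)²
  + 320334 * (a2*b2 - a3*b3)² + 5831 * (a2*b3 + a3*b0)² + 54803 * (a2*b3 - a3*b1)²
  + 54370 * (a2*b3 + a3*b2)² + 99112 * (a2*b3 - a3*b3)² + 13676 * (a3*b0 + a3*b1)²
  + 37695 * (a3*b0 + a3*b2)² + 97166 * (a3*b0 + a3*b3)² + 10481 * (a3*b1 - a3*b2)²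
  + 13394 * (a3*b1 + a3*b3)² + 102920 * (a3*b2 - a3*b3)² + 339690 * (a0*b0)²
  + 1173605 * (a0*b1)² + 1494722 * (a0*b2)² + 1515244 * (a0*b3)² + 1143933 * (a1*b0)²
  + 284463 * (a1*b1)² + 1476968 * (a1*b2)² + 1246055 * (a1*b3)² + 1438931 * (a2*b0)²
  + 1451168 * (a2*b1)² + 33843 * (a2*b2)² + 1468083 * (a2*b3)² + 1240918 * (a3*b0)²
  + 1734136 * (a3*b1)² + 1428830 * (a3*b2)² + 60193 * (a3*b3)².
have sos_ge0 : 0 <= sos.
  rewrite /sos; repeat apply: Rplus_le_le_0_compat;
    first [exact: Rle_0_sqr | apply: Rmult_le_pos; [lra | exact: Rle_0_sqr]].
match goal with |- 3 * ?N <= 100 * ?S =>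
  suff sosE : 100000000 * S - 3000000 * N = sos by clearbody sos; lra end.
by rewrite /sos /perp_form4 /Rsqr; ring.
Qed.

Lemma six_forms_eq0_norms_le0 :
  perp_form4 3 (-2) (-1) (-1) = 0 -> perp_form4 (-3) 2 (-1) 0 = 0 ->
  perp_form4 0 (-1) 2 (-1) = 0 -> perp_form4 3 2 2 (-3) = 0 ->
  perp_form4 2 2 (-3) (-1) = 0 -> perp_form4 0 2 (-2) (-2) = 0 ->
  (a0*a0 + a1*a1 + a2*a2 + a3*a3) * (b0*b0 + b1*b1 + b2*b2 + b3*b3) <= 0.
Proof.
move=> h0 h1 h2 h3 h4 h5; have := six_forms_dominate.
by rewrite h0 h1 h2 h3 h4 h5 /Rsqr; lra.
Qed.

End Certificate.

Definition normal (i : 'I_6) : Rn 4 := \row_j nth 0 (nth [::] normals i) j.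

Lemma normal_neq0 i : normal i != 0.
Proof.
apply/eqP => /rowP /(_ 1); rewrite !mxE.
by case: i => [[|[|[|[|[|[|//]]]]]] ?] /=; apply: (eq_IZR_contrapositive _ 0).
Qed.

Lemma dotv4 (x y : Rn 4) :
  dotv x y = x 0 0 * y 0 0 + x 0 1 * y 0 1 + x 0 2 * y 0 2 + x 0 3 * y 0 3.
Proof.
rewrite /dotv !big_ord_recl big_ord0 addr0 !addrA.
by congr (_ + _ + _ + _); congr (x 0 _ * y 0 _); apply: val_inj.
Qed.

Lemma perp_form4E (u a b : Rn 4) :
  perp_form u a b = perp_form4 (a 0 0) (a 0 1) (a 0 2) (a 0 3)
    (b 0 0) (b 0 1) (b 0 2) (b 0 3) (u 0 0) (u 0 1) (u 0 2) (u 0 3).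
Proof. by rewrite /perp_form !dotv4. Qed.

Lemma normal_forms_eq0 (a b : Rn 4) :
  (forall i, perp_form (normal i) a b = 0) -> a = 0 \/ b = 0.
Proof.
move=> forms0; have form0 k (lt_k6 : (k < 6)%nat) := forms0 (Ordinal lt_k6).
have ab_le0 : dotv a a * dotv b b <= 0.
  apply/RleP; rewrite !dotv4.
  move: (form0 0 isT) (form0 1 isT) (form0 2 isT)
        (form0 3 isT) (form0 4 isT) (form0 5 isT).
  by rewrite !perp_form4E !mxE /=; exact: six_forms_eq0_norms_le0.
have /eqP : dotv a a * dotv b b = 0.
  by apply/le_anti; rewrite ab_le0 mulr_ge0 ?dotvv_ge0.
by rewrite mulf_eq0 !dotvv_eq0 => /orP[] /eqP; [left | right].
Qed.

Theorem mainTheorem8 :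
  exists W : 'I_6 -> 'M[Rdefinitions.R]_4,
    (forall i, hyperplane (W i)) /\ phase_retrieval W.
Proof.
exists (fun i => perp_mx (normal i)); split.
  by move=> i; apply: rank_perp_mx; apply: normal_neq0.
exact: phase_retrieval_perp_mx normal_neq0 normal_forms_eq0.
Qed.
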